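(* Let $B,B'\in M_n(R)$ and suppose $B'$ is tropically similar to $B$, i.e. $B'=A^\nabla BA$ for some non-singular $A\in M_n(R)$. Then (a) $\det(B')\models_{gs}\det(B)$, with equality when $B'$ is non-singular; and (b) $\operatorname{tr}(B')\models_{gs}\operatorname{tr}(B)$, where $\operatorname{tr}$ denotes the sum of diagonal entries.
   Context: Supertropical semiring $R=T\cup G\cup\{-\infty\}$: $T=\mathcal G$ an ordered abelian group (tangible), $G=\{a^\nu\}$ a copy (ghost); $a+b$ is the element of larger $\nu$-value if the $\nu$-values differ and $a^\nu$ if equal; multiplication adds $\nu$-values, is ghost if a factor is ghost, $-\infty$ absorbing; $0_R=-\infty$, $1_R=0$. Ghost surpassing: $a\models_{gs}b$ iff $a=b$, or $a\in G$ and the $\nu$-value of $a$ is $\geq$ that of $b$. $\det(A)=\sum_{\sigma\in S_n}\prod_i a_{i,\sigma(i)}$; $A$ non-singular iff $\det(A)\in T$. $\operatorname{adj}(A)_{i,j}=\det(A_{j,i})$ (minor deleting row $j$, column $i$), and for non-singular $A$, $A^\nabla=\det(A)^{-1}\operatorname{adj}(A)$. *)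

From HB Require Import structures.
From mathcomp Require Import all_boot all_order all_algebra all_fingroup.
Set Implicit Arguments. Unset Strict Implicit. Unset Printing Implicit Defensive.
Import GRing.Theory.
Local Open Scope ring_scope.

Definition ordered_abgroup (G : zmodType) (le : rel G) : Prop :=
  [/\ reflexive le, antisymmetric le, transitive le, total le
    & forall a b c : G, le a b -> le (a + c) (b + c)].

Inductive stv (G : Type) : Type :=
  | NegInf : stv G             (* -oo = 0_R *)
  | Tan : G -> stv G
  | Gh : G -> stv G.           (* ghost a^nu *)
Arguments NegInf {G}.

Section Supertropical.
Variables (G : zmodType) (le : rel G).

Definition ltG (a b : G) : bool := le a b && ~~ le b a.

Definition nuv (x : stv G) : option G :=
  match x with NegInf => None | Tan a => Some a | Gh a => Some a end.

Definition is_tangible (x : stv G) : bool :=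
  if x is Tan _ then true else false.
Definition is_ghost (x : stv G) : bool :=
  if x is Gh _ then true else false.

Definition sadd (x y : stv G) : stv G :=
  match nuv x, nuv y with
  | None, _ => y
  | _, None => x
  | Some a, Some b => if ltG a b then y else if ltG b a then x else Gh a
  end.

Definition smul (x y : stv G) : stv G :=
  match x, y with
  | NegInf, _ => NegInf
  | _, NegInf => NegInf
  | Tan a, Tan b => Tan (a + b)
  | Tan a, Gh b | Gh a, Tan b | Gh a, Gh b => Gh (a + b)
  end.

Definition sone : stv G := Tan 0.

Definition gs (x y : stv G) : Prop :=
  x = y \/
  (match x with
   | Gh a => match nuv y with None => True | Some b => le b a end
   | _ => False
   end).

Definition sdet (n : nat) (A : 'M[stv G]_n) : stv G :=
  \big[sadd/NegInf]_(s : 'S_n) \big[smul/sone]_(i < n) A i (s i).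

Definition nonsingular (n : nat) (A : 'M[stv G]_n) : bool :=
  is_tangible (sdet A).

Definition strace (n : nat) (A : 'M[stv G]_n) : stv G :=
  \big[sadd/NegInf]_(i < n) A i i.

Definition smulmx (m n p : nat) (A : 'M[stv G]_(m, n)) (B : 'M[stv G]_(n, p))
  : 'M[stv G]_(m, p) :=
  \matrix_(i, j) \big[sadd/NegInf]_(k < n) smul (A i k) (B k j).

Definition sadj (n : nat) (A : 'M[stv G]_n) : 'M[stv G]_n :=
  \matrix_(i, j) sdet (row' j (col' i A)).

(* inverse of an element; only meaningful for tangible elements *)
Definition sinv (x : stv G) : stv G :=
  match x with NegInf => NegInf | Tan a => Tan (- a) | Gh a => Gh (- a) end.

Definition snabla (n : nat) (A : 'M[stv G]_n) : 'M[stv G]_n :=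
  \matrix_(i, j) smul (sinv (sdet A)) (sadj A i j).

End Supertropical.

(* Let d = det A be tangible, N = A^nabla and B' = N B A.  The proof rests on
   three facts.
   (1) Supertropical Binet: det (X Y) |=gs det X * det Y, because the terms of
       det (X Y) indexed by non-injective column maps cancel in pairs into a
       ghost, and the injective ones reassemble det X * det Y.
   (2) det N has nu-value exactly -nu(d), so that det N * det A is 1 or 1^nu.
       The lower bound comes from an optimal permutation of A.  The upper bound
       needs a dual certificate for the assignment problem ("potentials"
       u, v with nu(A r c) <= u r + v c and sum u + sum v = nu(d)); these are
       built from the maximal weights of simple paths in the graph of A
       normalised along the optimal permutation, whose cycles all have
       non-positive weight.
   (3) A N has diagonal entries 1 (Laplace expansion) and off-diagonal entries
       that are determinants with two equal rows, hence not tangible.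
   Then det B' |=gs det N * det B * det A |=gs det B by (1) and (2), and
   tr B' = sum_(k,l) B k l (A N) l k |=gs tr B by (3). *)

From HB Require Import structures.
From Pilot Require Import Defs.
From mathcomp Require Import all_boot all_order all_algebra all_fingroup.
Set Implicit Arguments. Unset Strict Implicit. Unset Printing Implicit Defensive.
Import GRing.Theory.
Local Open Scope ring_scope.

(* Removing the pair (j, s j) from a permutation s of 'I_n.+1 leaves a
   permutation of 'I_n; [lift_perm j (s j)] puts it back. *)
Definition unlift_perm_fun n (j : 'I_n.+1) (s : 'S_n.+1) (k : 'I_n) : 'I_n :=
  odflt k (unlift (s j) (s (lift j k))).

Lemma unlift_perm_funK n (j : 'I_n.+1) (s : 'S_n.+1) k :
  lift (s j) (unlift_perm_fun j s k) = s (lift j k).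
Proof.
rewrite /unlift_perm_fun; have := neq_lift j k.
by rewrite -(can_eq (permK s)) => /unlift_some[] ? ? ->.
Qed.

Lemma unlift_perm_fun_inj n (j : 'I_n.+1) (s : 'S_n.+1) : injective (unlift_perm_fun j s).
Proof.
move=> k1 k2 /(congr1 (lift (s j))); rewrite !unlift_perm_funK.
by move/perm_inj/lift_inj.
Qed.

Definition unlift_perm n (j : 'I_n.+1) (s : 'S_n.+1) : 'S_n :=
  perm (@unlift_perm_fun_inj n j s).

Lemma unlift_permK n (j : 'I_n.+1) (s : 'S_n.+1) :
  lift_perm j (s j) (unlift_perm j s) = s.
Proof.
apply/permP => k; case: (unliftP j k) => [k'|] ->; rewrite ?lift_perm_id //.
by rewrite lift_perm_lift permE unlift_perm_funK.
Qed.

Lemma unlift_lift_perm n (j k : 'I_n.+1) (t : 'S_n) : unlift_perm j (lift_perm j k t) = t.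
Proof.
apply/permP => k'; apply: (@lift_inj _ k); rewrite permE.
by rewrite -{1}(lift_perm_id j k t) unlift_perm_funK lift_perm_lift.
Qed.

Section Supertropical.
Variables (G : zmodType) (le : rel G) (Hle : ordered_abgroup le).

Let le_refl : reflexive le. Proof. by case: Hle. Qed.
Let le_anti : antisymmetric le. Proof. by case: Hle. Qed.
Let le_trans : transitive le. Proof. by case: Hle. Qed.
Let le_total : total le. Proof. by case: Hle. Qed.
Let le_add : forall a b c, le a b -> le (a + c) (b + c). Proof. by case: Hle. Qed.

Lemma le_add2r a b c : le (a + c) (b + c) = le a b.
Proof.
apply/idP/idP; last exact: le_add.
by move/(le_add (- c)); rewrite -!addrA subrr !addr0.
Qed.

Lemma le_add2 a b c d : le a b -> le c d -> le (a + c) (b + d).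
Proof.
move=> hab hcd; apply: (le_trans (le_add c hab)).
by rewrite ![b + _]addrC; apply: le_add.
Qed.

Lemma le_add2l a b c : le a b -> le (c + a) (c + b).
Proof. by rewrite ![c + _]addrC; apply: le_add. Qed.

Lemma le_subr y a b : le (y + a) b -> le y (b - a).
Proof. by move/(le_add (- a)); rewrite addrK. Qed.

Lemma le_subl y a b : le b (a + y) -> le (b - a) y.
Proof. by move/(le_add (- a)); rewrite [a + y]addrC addrK. Qed.

Lemma ltG_neg a b : ltG le a b = ~~ le b a.
Proof.
rewrite /ltG; case: (boolP (le b a)) => h; rewrite ?andbF ?andbT //.
by have := le_total a b; rewrite (negbTE h) orbF.
Qed.

Lemma nle_le a b : ~~ le a b -> le b a.
Proof. by move=> h; have := le_total a b; rewrite (negbTE h). Qed.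

Local Notation sadd := (sadd le).
Local Notation smul := (smul (G:=G)).
Local Notation sone := (sone G).
Local Notation gs := (gs le).
Local Notation sdet := (sdet le).

(* The laws of [sadd] are decided by comparing finitely many nu-values: after
   unfolding, [le_cases] splits on every comparison in the goal and
   [le_solve] discards the impossible orders and identifies equal values. *)
Ltac le_cases := repeat match goal with
 | |- context [le ?a ?b] => case: (boolP (le a b)) => ?
 end.

Ltac le_solve := repeat match goal with
 | H : is_true (~~ le ?a ?a) |- _ => by rewrite le_refl in H
 | H1 : is_true (~~ le ?a ?b), H2 : is_true (~~ le ?b ?a) |- _ =>
     by have := le_total a b; rewrite (negbTE H1) (negbTE H2)
 | H1 : is_true (le ?a ?b), H2 : is_true (le ?b ?c), H3 : is_true (~~ le ?a ?c) |- _ =>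
     by rewrite (le_trans H1 H2) in H3
 | H1 : is_true (~~ le ?a ?b) |- _ =>
     lazymatch goal with H : is_true (le b a) |- _ => fail | _ => have ? := nle_le H1 end
 | H1 : is_true (le ?a ?b), H2 : is_true (le ?b ?a) |- _ =>
     have ? := le_anti (introT andP (conj H1 H2)); subst; clear H1 H2
 end; try done; try match goal with
  | H : is_true (~~ ?b) |- ?b = false => exact: negbTE H
  | H : is_true ?b |- ?b = true => exact: H
  | H : is_true (~~ ?b) |- false = ?b => exact: esym (negbTE H)
  | H : is_true ?b |- true = ?b => exact: esym H
  end.

Ltac sadd_cases := rewrite ?/Defs.sadd /= ?ltG_neg ?le_add2r; le_cases => //=;
  rewrite ?ltG_neg; le_cases => //=; le_solve.

Lemma saddC : commutative sadd.
Proof. by case=> [|a|a] [|b|b] //; sadd_cases. Qed.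

Lemma saddA : associative sadd.
Proof. by case=> [|a|a] [|b|b] [|c|c] //; sadd_cases. Qed.

Lemma add0s : left_id NegInf sadd. Proof. by case. Qed.
Lemma adds0 : right_id NegInf sadd. Proof. by case. Qed.

Lemma smulA : associative smul.
Proof. by case=> [|a|a] [|b|b] [|c|c] //=; rewrite addrA. Qed.
Lemma smulC : commutative smul.
Proof. by case=> [|a|a] [|b|b] //=; rewrite addrC. Qed.
Lemma mul1s : left_id sone smul.
Proof. by case=> [|a|a] //=; rewrite /sone /= add0r. Qed.
Lemma muls1 : right_id sone smul.
Proof. by move=> x; rewrite smulC mul1s. Qed.
Lemma smulCA x y z : smul x (smul y z) = smul y (smul x z).
Proof. by rewrite smulA [smul x y]smulC -smulA. Qed.
Lemma smul_rot x y z : smul (smul x y) z = smul y (smul z x).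
Proof. by rewrite [smul x y]smulC -smulA [smul x z]smulC. Qed.
Lemma mul0s : left_zero NegInf smul. Proof. by case. Qed.
Lemma muls0 : right_zero NegInf smul. Proof. by case=> [|a|a]. Qed.

Lemma smulDl : left_distributive smul sadd.
Proof. by case=> [|a|a] [|b|b] [|c|c] //; sadd_cases. Qed.
Lemma smulDr : right_distributive smul sadd.
Proof. by move=> x y z; rewrite ![smul x _]smulC smulDl. Qed.

HB.instance Definition _ := Monoid.isComLaw.Build (stv G) NegInf sadd saddA saddC add0s.
HB.instance Definition _ := Monoid.isComLaw.Build (stv G) sone smul smulA smulC mul1s.
HB.instance Definition _ := Monoid.isMulLaw.Build (stv G) NegInf smul mul0s muls0.
HB.instance Definition _ := Monoid.isAddLaw.Build (stv G) smul sadd smulDl smulDr.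

Definition nu_le (x : stv G) (g : G) : bool :=
  match x with NegInf => true | Tan a => le a g | Gh a => le a g end.
Definition nu_ge (g : G) (x : stv G) : bool :=
  match x with NegInf => false | Tan a => le g a | Gh a => le g a end.
Definition nontan (x : stv G) : bool := if x is Tan _ then false else true.

(* The nu-value of a finite element (0 for -oo, where it is irrelevant). *)
Definition nu_of (x : stv G) : G :=
  match x with NegInf => 0 | Tan a => a | Gh a => a end.

Lemma nu_of_spec x : x <> NegInf -> nu_le x (nu_of x) /\ nu_ge (nu_of x) x.
Proof. by case: x => [|a|a] //= _; rewrite le_refl. Qed.

Lemma nu_exact x g : nu_le x g -> nu_ge g x -> x = Tan g \/ x = Gh g.
Proof.
case: x => [|a|a] //= h1 h2;
  have -> := le_anti (introT andP (conj h1 h2)); by [left|right].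
Qed.

Lemma nu_le_trans x g h : nu_le x g -> le g h -> nu_le x h.
Proof. by case: x => [|a|a] //= h1 h2; apply: le_trans h2. Qed.

Lemma nu_ge_le x g h : nu_ge g x -> nu_le x h -> le g h.
Proof. by case: x => [|a|a] //= h1 h2; apply: le_trans h2. Qed.

Lemma nu_ge_finite g x : nu_ge g x -> x <> NegInf. Proof. by case: x. Qed.

Lemma nu_le_sadd x y g : nu_le (sadd x y) g = nu_le x g && nu_le y g.
Proof. by case: x y => [|a|a] [|b|b] //=; rewrite ?andbT; sadd_cases. Qed.

Lemma nu_ge_sadd g x y : nu_ge g (sadd x y) = nu_ge g x || nu_ge g y.
Proof. by case: x y => [|a|a] [|b|b] //=; rewrite ?orbF; sadd_cases. Qed.

Lemma nu_le_smul x y g h : nu_le x g -> nu_le y h -> nu_le (smul x y) (g + h).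
Proof. by case: x y => [|a|a] [|b|b] //=; apply: le_add2. Qed.

Lemma nu_ge_smul x y g h : nu_ge g x -> nu_ge h y -> nu_ge (g + h) (smul x y).
Proof. by case: x y => [|a|a] [|b|b] //=; apply: le_add2. Qed.

Lemma nu_le_smul_inv x y a b : nu_ge a x -> nu_le (smul x y) b -> nu_le y (b - a).
Proof.
case: x => [|x|x] //; case: y => [|y|y] //= h1 h2; apply: le_subr;
  apply: le_trans h2; rewrite [y + a]addrC; exact: le_add.
Qed.

Lemma nu_ge_smul_inv x y a b : nu_le x a -> nu_ge b (smul x y) -> nu_ge (b - a) y.
Proof.
case: x => [|x|x] //; case: y => [|y|y] //= h1 h2; apply: le_subl;
  apply: le_trans h2 _; exact: le_add.
Qed.

Lemma nu_le_smulT_inv x t g : nu_le (smul x (Tan t)) g -> nu_le x (g - t).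
Proof. by case: x => [|x|x] //= h; apply: le_subr. Qed.

Lemma nu_le_chain X Y Z a b :
  nu_le X b -> nu_ge a (smul X Y) -> nu_le (smul Y Z) 0 -> nu_le Z (b - a).
Proof.
case: X => [|x|x] //; case: Y => [|y|y] //; case: Z => [|z|z] //= hx hxy hyz;
  apply: le_subr; apply: le_trans (le_add2l z hxy) _;
  rewrite [x + y]addrC addrA [z + y]addrC; apply: le_trans (le_add x hyz) _;
  by rewrite add0r.
Qed.

Lemma nontan_sadd x y : nontan x -> nontan y -> nontan (sadd x y).
Proof. by case: x y => [|a|a] [|b|b] //; sadd_cases. Qed.

Lemma nontan_smulr x y : nontan y -> nontan (smul x y).
Proof. by case: x y => [|a|a] [|b|b]. Qed.

(* x + x = x^nu: doubling never gives a tangible element. *)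
Lemma nontan_double x : nontan (sadd x x).
Proof. by case: x => [|a|a] //=; rewrite /Defs.sadd /= ltG_neg le_refl. Qed.

Lemma prod_Tan (I : Type) (r : seq I) (P : pred I) (f : I -> G) :
  \big[smul/sone]_(i <- r | P i) Tan (f i) = Tan (\sum_(i <- r | P i) f i).
Proof. by apply: (big_rec2 (fun x a => x = Tan a)) => // i x a _ ->. Qed.

Lemma gs_refl x : gs x x. Proof. by left. Qed.

Lemma gs_trans x y z : gs x y -> gs y z -> gs x z.
Proof.
case=> [->|] //; case: x => [|a|a] //= h1 [<-|]; first by right.
case: y h1 => [|b|b] //=; case: z => [|c|c] //= h1 h2; right => //=;
  exact: le_trans h2 h1.
Qed.

Lemma gs_nontan z : nontan z -> gs z NegInf.
Proof. by case: z => [|a|a] //= _; [left|right]. Qed.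

Lemma gs_tangible x y : gs x y -> is_tangible x -> x = y.
Proof. by case=> //; case: x. Qed.

Lemma gs_saddl x y z : gs x y -> gs (sadd x z) (sadd y z).
Proof.
case=> [->|]; first exact: gs_refl.
case: x => [|a|a] //; case: y => [|b|b] //= h; case: z => [|c|c];
  rewrite /gs; sadd_cases; by [left|right].
Qed.

Lemma gs_sadd a b x y : gs a b -> gs x y -> gs (sadd a x) (sadd b y).
Proof.
move=> h1 h2; apply: (gs_trans (gs_saddl x h1)).
by rewrite ![sadd b _]saddC; apply: gs_saddl.
Qed.

Lemma gs_smull x y z : gs x y -> gs (smul x z) (smul y z).
Proof.
case=> [->|]; first exact: gs_refl.
case: x => [|a|a] //; case: y => [|b|b] //= h; case: z => [|c|c] /=;
  try by [left|right]; by right => //=; rewrite le_add2r.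
Qed.

Section BigBounds.
Variable I : eqType.
Implicit Types (r : seq I) (P : pred I).

Lemma nu_le_big r P F g :
  (forall i, P i -> nu_le (F i) g) -> nu_le (\big[sadd/NegInf]_(i <- r | P i) F i) g.
Proof.
move=> h; apply: (big_ind (fun x => nu_le x g)) => // x y hx hy.
by rewrite nu_le_sadd hx hy.
Qed.

Lemma nu_le_big_term r P F g i :
  i \in r -> P i -> nu_le (\big[sadd/NegInf]_(i <- r | P i) F i) g -> nu_le (F i) g.
Proof.
elim: r => [|x r IH] //; rewrite inE big_cons => /orP [/eqP <-|h] Pi.
  by rewrite Pi nu_le_sadd => /andP[].
by case: ifP => _; rewrite ?nu_le_sadd; [case/andP => _; apply: IH | apply: IH].
Qed.

Lemma nu_ge_big_term r P F g i :
  i \in r -> P i -> nu_ge g (F i) -> nu_ge g (\big[sadd/NegInf]_(i <- r | P i) F i).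
Proof.
elim: r => [|x r IH] //; rewrite inE big_cons => /orP [/eqP <-|h] Pi hi.
  by rewrite Pi nu_ge_sadd hi.
by case: ifP => _; rewrite ?nu_ge_sadd IH ?orbT.
Qed.

Lemma nu_ge_big_attained r P F g :
  nu_ge g (\big[sadd/NegInf]_(i <- r | P i) F i) ->
  exists i, [/\ i \in r, P i & nu_ge g (F i)].
Proof.
elim: r => [|x r IH]; first by rewrite big_nil.
rewrite big_cons; case: ifP => Px; last first.
  by case/IH => i [h1 h2 h3]; exists i; rewrite inE h1 orbT.
rewrite nu_ge_sadd => /orP [h|/IH [i [h1 h2 h3]]]; first by exists x; rewrite inE eqxx.
by exists i; rewrite inE h1 orbT.
Qed.

Lemma nu_le_prod r P F g :
  (forall i, P i -> nu_le (F i) (g i)) ->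
  nu_le (\big[smul/sone]_(i <- r | P i) F i) (\sum_(i <- r | P i) g i).
Proof.
move=> h; apply: (big_rec2 (fun x s => nu_le x s)); first exact: le_refl.
by move=> i x s Pi hx; apply: nu_le_smul => //; apply: h.
Qed.

Lemma nu_ge_prod r P F g :
  (forall i, P i -> nu_ge (g i) (F i)) ->
  nu_ge (\sum_(i <- r | P i) g i) (\big[smul/sone]_(i <- r | P i) F i).
Proof.
move=> h; apply: (big_rec2 (fun s x => nu_ge s x)); first exact: le_refl.
by move=> i s x Pi hx; apply: nu_ge_smul => //; apply: h.
Qed.

Lemma nontan_big r P F :
  (forall i, P i -> nontan (F i)) -> nontan (\big[sadd/NegInf]_(i <- r | P i) F i).
Proof. by move=> h; apply: (big_ind nontan) => // x y; apply: nontan_sadd. Qed.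

Lemma gs_big r P F H :
  (forall i, P i -> gs (F i) (H i)) ->
  gs (\big[sadd/NegInf]_(i <- r | P i) F i) (\big[sadd/NegInf]_(i <- r | P i) H i).
Proof.
move=> h; apply: (big_rec2 (fun x y => gs x y)); first exact: gs_refl.
by move=> i x y Pi hxy; apply: gs_sadd => //; apply: h.
Qed.

End BigBounds.

Definition perm_term n (M : 'M[stv G]_n) (s : 'S_n) : stv G :=
  \big[smul/sone]_(i < n) M i (s i).

Lemma sdetE n (M : 'M[stv G]_n) : sdet M = \big[sadd/NegInf]_(s : 'S_n) perm_term M s.
Proof. by []. Qed.

Lemma perm_term_lift n (M : 'M[stv G]_n.+1) j k (t : 'S_n) :
  perm_term M (lift_perm j k t) = smul (M j k) (perm_term (row' j (col' k M)) t).
Proof.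
rewrite /perm_term (bigD1_ord j) //= lift_perm_id; congr smul.
by apply: eq_bigr => i _; rewrite !mxE lift_perm_lift.
Qed.

Lemma det_expand_row n (M : 'M[stv G]_n.+1) j :
  sdet M = \big[sadd/NegInf]_k smul (M j k) (sdet (row' j (col' k M))).
Proof.
rewrite sdetE (partition_big (fun s : 'S_n.+1 => s j) predT) //=.
apply: eq_bigr => k _; rewrite (reindex (lift_perm j k)); last first.
  exists (unlift_perm j) => [t _|s]; first exact: unlift_lift_perm.
  by rewrite inE => /eqP <-; apply: unlift_permK.
rewrite sdetE big_distrr /=.
apply: eq_big => [t | t _]; first by rewrite lift_perm_id eqxx.
exact: perm_term_lift.
Qed.

Lemma nontan_sum_involution (I : finType) (P : pred I) (h : I -> I) (F : I -> stv G) :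
  involutive h -> (forall x, P x -> [/\ P (h x), h x != x & F (h x) = F x]) ->
  nontan (\big[sadd/NegInf]_(x | P x) F x).
Proof.
move=> hK hP; rewrite (bigID (fun x => enum_rank x < enum_rank (h x))%N) /=.
set S := \big[sadd/NegInf]_(i | P i && _) F i.
suff -> : \big[sadd/NegInf]_(i | P i && ~~ (enum_rank i < enum_rank (h i))%N) F i = S.
  exact: nontan_double.
rewrite (reindex_inj (inv_inj hK)) /S; apply: eq_big => [x|x /andP[Px _]]; last first.
  by have [_ _] := hP _ Px; rewrite hK => ->.
rewrite hK; case Px: (P x) => /=.
  have [-> hx _] := hP x Px; rewrite /= -leqNgt leq_eqVlt.
  suff /negbTE -> : (enum_rank x : nat) != enum_rank (h x) by [].
  by rewrite (inj_eq val_inj) (inj_eq enum_rank_inj) eq_sym.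
by case Phx: (P (h x)) => //=; have [] := hP _ Phx; rewrite hK Px.
Qed.

(* A determinant with two equal rows is not tangible: the transposition of
   those rows pairs up its terms. *)
Lemma nontan_det_equal_rows n (M : 'M[stv G]_n) r1 r2 :
  r1 != r2 -> (forall c, M r1 c = M r2 c) -> nontan (sdet M).
Proof.
move=> r12 hM; rewrite sdetE.
apply: (@nontan_sum_involution _ predT (fun s => tperm r1 r2 * s)%g); first exact: tpermKg.
move=> s _; split => //.
  apply/eqP => /(congr1 (fun p : 'S_n => p r1)); rewrite permM tpermL => /perm_inj.
  by move/eqP; rewrite eq_sym (negbTE r12).
rewrite /perm_term (reindex_inj (@perm_inj _ (tperm r1 r2))) /=.
apply: eq_bigr => i _; rewrite permM tpermK.
by case: tpermP => [->|->|] //; rewrite hM.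
Qed.

Definition collision_swap n (f : {ffun 'I_n -> 'I_n}) : 'S_n :=
  if [pick ij : 'I_n * 'I_n | (ij.1 != ij.2) && (f ij.1 == f ij.2)] is Some ij
  then tperm ij.1 ij.2 else 1%g.

Lemma nontan_noninjective_terms n (X Y : 'M[stv G]_n) :
  nontan (\big[sadd/NegInf]_(f : {ffun 'I_n -> 'I_n} | ~~ injectiveb f)
       \big[sadd/NegInf]_(s : 'S_n)
         smul (\big[smul/sone]_i X i (f i)) (\big[smul/sone]_i Y (f i) (s i))).
Proof.
rewrite pair_big /=.
apply: (@nontan_sum_involution _ _ (fun p => (p.1, collision_swap p.1 * p.2)%g)).
  move=> [f s] /=; rewrite mulgA; congr pair; rewrite /collision_swap.
  by case: pickP => [ij _|_]; rewrite ?tperm2 ?mul1g.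
move=> [f s] /= hf; rewrite /collision_swap.
case: pickP => [[i1 i2] /= /andP [h12 hf12]|none]; last first.
  move: hf; rewrite andbT => /injectiveP; case => x y fxy.
  apply/eqP; apply: contraT => hxy.
  by have := none (x, y); rewrite /= hxy fxy eqxx.
split => //.
  apply/eqP => [[]] /(congr1 (fun p : 'S_n => p i1)); rewrite permM tpermL => /perm_inj.
  by move/eqP; rewrite eq_sym (negbTE h12).
congr smul; rewrite (reindex_inj (@perm_inj _ (tperm i1 i2))) /=.
apply: eq_bigr => i _; rewrite permM tpermK.
by case: tpermP => [->|->|] //; rewrite (eqP hf12).
Qed.

Lemma injective_terms n (X Y : 'M[stv G]_n) :
  \big[sadd/NegInf]_(f : {ffun 'I_n -> 'I_n} | injectiveb f)
     \big[sadd/NegInf]_(s : 'S_n)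
       smul (\big[smul/sone]_i X i (f i)) (\big[smul/sone]_i Y (f i) (s i))
  = smul (sdet X) (sdet Y).
Proof.
rewrite (reindex (fun t : 'S_n => pval t)); last first.
  exists (fun f => insubd (1%g : 'S_n) f) => [t _|f]; first exact: valKd.
  by rewrite inE => hf; apply: insubdK.
rewrite (eq_bigl predT); last by move=> t; exact: (valP t).
rewrite sdetE big_distrl /=; apply: eq_bigr => t _.
rewrite -big_distrr /=; congr smul; first by apply: eq_bigr => i _; rewrite pvalE.
rewrite sdetE (reindex_inj (mulgI t)); apply: eq_bigr => s _.
rewrite /perm_term [RHS](reindex_inj (@perm_inj _ t)); apply: eq_bigr => i _.
by rewrite pvalE permM.
Qed.

Lemma det_mul_gs n (X Y : 'M[stv G]_n) :
  gs (sdet (smulmx le X Y)) (smul (sdet X) (sdet Y)).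
Proof.
have expand s : perm_term (smulmx le X Y) s =
    \big[sadd/NegInf]_(f : {ffun 'I_n -> 'I_n})
      smul (\big[smul/sone]_i X i (f i)) (\big[smul/sone]_i Y (f i) (s i)).
  rewrite /perm_term; under eq_bigr do rewrite mxE.
  by rewrite bigA_distr_bigA; apply: eq_bigr => f _; rewrite big_split.
rewrite sdetE; under eq_bigr do rewrite expand.
rewrite exchange_big /= (bigID (fun f : {ffun 'I_n -> 'I_n} => injectiveb f)) /=.
rewrite injective_terms -[X in gs _ X]adds0.
exact/gs_sadd/gs_nontan/nontan_noninjective_terms/gs_refl.
Qed.

(* Dual certificate for the assignment problem.  Normalising
   A by the entries of sg gives edge weights [edge i j] on 'I_n in which every
   cycle has non-positive weight; the maximal weight [pot j] of a simple path
   ending in j is then a potential, from which the row and column bounds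
   u, v with nu(A r c) <= u r + v c and sum u + sum v = d0 are read off. *)
Section Potentials.
Variables (n : nat) (A : 'M[stv G]_n) (sg : 'S_n) (d0 : G).
Hypothesis terms_bounded : forall s, nu_le (perm_term A s) d0.
Hypothesis sg_optimal : nu_ge d0 (perm_term A sg).

Let opt i := nu_of (A i (sg i)).

Lemma opt_spec i : nu_le (A i (sg i)) (opt i) /\ nu_ge (opt i) (A i (sg i)).
Proof.
apply: nu_of_spec => h; move: sg_optimal.
by rewrite /perm_term (bigD1 i) //= h /Defs.smul.
Qed.

Lemma sum_opt : \sum_i opt i = d0.
Proof.
apply: le_anti; apply/andP; split.
  by apply: nu_ge_le (terms_bounded sg); apply: nu_ge_prod => i _; exact: (opt_spec i).2.
by apply: nu_ge_le sg_optimal _; apply: nu_le_prod => i _; exact: (opt_spec i).1.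
Qed.

Definition edge i j := smul (A i (sg j)) (Tan (- opt i)).

Fixpoint path_weight (x : 'I_n) (s : seq 'I_n) : stv G :=
  if s is y :: s' then smul (edge x y) (path_weight y s') else sone.

Lemma path_weight_rcons x s y :
  path_weight x (rcons s y) = smul (path_weight x s) (edge (last x s) y).
Proof.
elim: s x => [|z s IH] x /=; last by rewrite IH smulA.
by rewrite muls1; case: (edge x y) => [|b|b] //=; rewrite add0r.
Qed.

Lemma path_weight_cat x s1 y s2 :
  path_weight x (s1 ++ y :: s2) = smul (path_weight x (rcons s1 y)) (path_weight y s2).
Proof. by elim: s1 x => [|z s1 IH] x /=; rewrite ?muls1 // IH smulA. Qed.

Lemma path_weight_frel f x s : path (frel f) x s ->
  path_weight x s = \big[smul/sone]_(y <- belast x s) edge y (f y).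
Proof.
elim: s x => [|y s IH] x /=; first by rewrite big_nil.
by case/andP => /eqP <- hp; rewrite big_cons IH.
Qed.

(* Every cycle j, p2, j has non-positive weight: completing it by sg outside
   the cycle gives a term of det A. *)
Lemma cycle_weight_le0 j p2 : uniq (j :: p2) ->
  nu_le (smul (path_weight j p2) (edge (last j p2) j)) 0.
Proof.
move=> U; rewrite -path_weight_rcons.
have hp : path (frel (next (j :: p2))) j (rcons p2 j) := cycle_next U.
rewrite (path_weight_frel hp) belast_rcons (big_uniq _ U) /=.
set C := j :: p2.
pose rho : 'S_n := perm (can_inj (prev_next U)).
have := terms_bounded (rho * sg)%g.
rewrite /perm_term (bigID (fun y => y \in C)) /=.
rewrite (eq_bigr (fun y => A y (sg (next C y)))); last by move=> y _; rewrite permM permE.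
rewrite [X in smul _ X](eq_bigr (fun y => A y (sg y))); last first.
  by move=> y hy; rewrite permM permE next_nth (negbTE hy).
rewrite smulC => h.
have hout : nu_ge (\sum_(y | y \notin C) opt y)
                  (\big[smul/sone]_(y | y \notin C) A y (sg y)).
  by apply: nu_ge_prod => y _; exact: (opt_spec y).2.
have {}h := nu_le_smul_inv hout h.
rewrite (eq_bigr (fun y => smul (A y (sg (next C y))) (Tan (- opt y)))) //.
rewrite big_split prod_Tan.
have hT : nu_le (Tan (\sum_(i in C) - opt i)) (\sum_(i in C) - opt i) by exact: le_refl.
apply: nu_le_trans (nu_le_smul h hT) _.
by rewrite -sum_opt (bigID (fun y => y \in C)) /= addrK sumrN subrr; apply: le_refl.
Qed.

(* The sequences of length at most k, a finite range for simple paths. *)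
Fixpoint short_seqs k : seq (seq 'I_n) :=
  if k is k'.+1 then [::] :: [seq x :: s | x <- enum 'I_n, s <- short_seqs k']
  else [:: [::]].

Lemma mem_short_seqs k s : (size s <= k)%N -> s \in short_seqs k.
Proof.
elim: k s => [|k IH] [|x s] //=; rewrite ?inE //= ltnS => hs.
apply: (allpairs_f (fun x s => x :: s)); first by rewrite mem_enum.
exact: IH.
Qed.

Definition simple_path_to j (p : seq 'I_n) : bool :=
  uniq p && (if p is x :: s then last x s == j else false).

Definition seq_weight (p : seq 'I_n) : stv G :=
  if p is x :: s then path_weight x s else NegInf.

Definition best_path j : stv G :=
  \big[sadd/NegInf]_(p <- short_seqs n | simple_path_to j p) seq_weight p.

Lemma simple_path_short j p : simple_path_to j p -> p \in short_seqs n.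
Proof.
case/andP => /card_uniqP hu _; apply: mem_short_seqs.
by rewrite -hu; apply: leq_trans (max_card _) _; rewrite card_ord.
Qed.

Lemma simple_path_cat i p1 j p2 :
  simple_path_to i (p1 ++ j :: p2) = uniq (p1 ++ j :: p2) && (last j p2 == i).
Proof. by case: p1 => [|x p1] //=; rewrite /simple_path_to /= last_cat. Qed.

Lemma simple_path_rcons p1 j : uniq (rcons p1 j) -> simple_path_to j (rcons p1 j).
Proof.
by move=> hu; rewrite /simple_path_to hu; case: p1 {hu} => [|x p1] //=; rewrite last_rcons.
Qed.

Lemma seq_weight_cat p1 j p2 :
  seq_weight (p1 ++ j :: p2) = smul (seq_weight (rcons p1 j)) (path_weight j p2).
Proof.
by case: p1 => [|x p1]; [rewrite mul1s | apply: path_weight_cat].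
Qed.

(* The trivial path [:: j] has weight 1, so best_path j is finite. *)
Lemma best_path_ge0 j : nu_ge 0 (best_path j).
Proof.
have ok : simple_path_to j [:: j] by rewrite /simple_path_to /= eqxx.
by apply: (nu_ge_big_term (simple_path_short ok) ok); rewrite /= le_refl.
Qed.

Let pot j := nu_of (best_path j).

Lemma pot_spec j : nu_le (best_path j) (pot j) /\ nu_ge (pot j) (best_path j).
Proof. exact/nu_of_spec/(nu_ge_finite (best_path_ge0 j)). Qed.

(* pot is a potential: nu(edge i j) <= pot j - pot i.  Extend an optimal
   path to i by the edge to j; if j already lies on it, the part after j is
   a cycle, whose weight is non-positive. *)
Lemma edge_le_pot i j : nu_le (edge i j) (pot j - pot i).
Proof.
have [p [pin ok hp]] := nu_ge_big_attained (pot_spec i).2.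
case: (boolP (j \in p)) => hj.
  case/splitPr: hj ok hp pin => p1 p2 ok hp _.
  move: ok; rewrite simple_path_cat => /andP [U /eqP hi].
  move: U; rewrite cat_uniq /= => /and4P [U1 hn hj2 U2].
  have U3 : uniq (j :: p2) by rewrite /= hj2.
  have Ur : uniq (rcons p1 j).
    rewrite rcons_uniq U1 andbT; apply/negP => hj1.
    by move: hn; rewrite negb_or; case/andP; rewrite hj1.
  have hb : nu_le (seq_weight (rcons p1 j)) (pot j).
    apply: (nu_le_big_term _ (simple_path_rcons Ur) (pot_spec j).1).
    exact/simple_path_short/simple_path_rcons.
  rewrite seq_weight_cat in hp.
  have := cycle_weight_le0 U3; rewrite hi => hc.
  exact: nu_le_chain hb hp hc.
case: p ok hp hj pin => [|x s] // /andP [U /eqP hi] /= hp hj _.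
have ok' : simple_path_to j (x :: rcons s j).
  by rewrite /simple_path_to -rcons_cons rcons_uniq hj U /= last_rcons eqxx.
have := nu_le_big_term _ ok' (pot_spec j).1; rewrite /= path_weight_rcons hi => h.
exact: nu_le_smul_inv hp (h (simple_path_short ok')).
Qed.

Lemma dual_potentials : exists u v : 'I_n -> G,
  (forall r c, nu_le (A r c) (u r + v c)) /\ \sum_i u i + \sum_i v i = d0.
Proof.
exists (fun r => opt r - pot r), (fun c => pot ((sg^-1)%g c)); split.
  move=> r c; have := edge_le_pot r (sg^-1%g c).
  rewrite /edge permKV => /nu_le_smulT_inv h; apply: nu_le_trans h _.
  by rewrite opprK addrC addrA addrAC; apply: le_refl.
rewrite [X in _ + X](reindex_inj (@perm_inj _ sg)) /=.
under [X in _ + X]eq_bigr do rewrite permK.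
by rewrite sumrB subrK sum_opt.
Qed.

End Potentials.

Lemma sum_lift n (f : 'I_n.+1 -> G) (k : 'I_n.+1) :
  \sum_(r < n) f (lift k r) = \sum_i f i - f k.
Proof. by rewrite (bigD1_ord k) //= [f k + _]addrC addrK. Qed.

Lemma minor_nu_le n (A : 'M[stv G]_n.+1) (u v : 'I_n.+1 -> G) i j :
  (forall r c, nu_le (A r c) (u r + v c)) ->
  nu_le (sdet (row' j (col' i A))) ((\sum_r u r - u j) + (\sum_c v c - v i)).
Proof.
move=> huv; rewrite sdetE; apply: nu_le_big => t _.
rewrite -(sum_lift u) -(sum_lift v).
rewrite [X in nu_le _ (_ + X)](reindex_inj (@perm_inj _ t)) /= -big_split /=.
by apply: nu_le_prod => r _; rewrite !mxE; apply: huv.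
Qed.

Section Nabla.
Variables (n : nat) (A : 'M[stv G]_n.+1) (d0 : G).
Hypothesis detA : sdet A = Tan d0.

Local Notation N := (snabla le A).

Lemma nablaE i j : N i j = smul (Tan (- d0)) (sdet (row' j (col' i A))).
Proof. by rewrite !mxE detA. Qed.

Lemma perm_term_bounded s : nu_le (perm_term A s) d0.
Proof.
have : nu_le (sdet A) d0 by rewrite detA /= le_refl.
by rewrite sdetE; apply: nu_le_big_term => //; apply: mem_index_enum.
Qed.

Lemma optimal_perm : exists sg, nu_ge d0 (perm_term A sg).
Proof.
have : nu_ge d0 (sdet A) by rewrite detA /= le_refl.
by rewrite sdetE => /nu_ge_big_attained [sg [_ _ hsg]]; exists sg.
Qed.

(* Upper bound: with the potentials u, v, every entry N i j is bounded by
   -(u j) - (v i), so every term of det N is bounded by -d0. *)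
Lemma nabla_det_nu_le : nu_le (sdet N) (- d0).
Proof.
have [sg hsg] := optimal_perm.
have [u [v [huv hsum]]] := dual_potentials perm_term_bounded hsg.
rewrite sdetE; apply: nu_le_big => rho _.
have -> : - d0 = \sum_i (- u (rho i) - v i).
  have hr : \sum_i u (rho i) = \sum_i u i by rewrite [RHS](reindex_inj (@perm_inj _ rho)).
  by rewrite big_split /= !sumrN hr -hsum opprD.
apply: nu_le_prod => i _; rewrite nablaE.
have hT : nu_le (Tan (- d0)) (- d0) by exact: le_refl.
apply: nu_le_trans (nu_le_smul hT (minor_nu_le i (rho i) huv)) _.
by rewrite -{1}hsum addrACA addKr; apply: le_refl.
Qed.

(* Lower bound: the term of det N for sg^-1 has nu-value -d0, since deleting
   the pair (j, sg j) from sg leaves an optimal term of the minor. *)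
Lemma nabla_det_nu_ge : nu_ge (- d0) (sdet N).
Proof.
have [sg hsg] := optimal_perm.
rewrite sdetE; apply: (@nu_ge_big_term _ _ _ _ _ (sg^-1)%g) => //.
  exact: mem_index_enum.
rewrite /perm_term (reindex_inj (@perm_inj _ sg)) /=.
have -> : - d0 = \sum_j - nu_of (A j (sg j))
  by rewrite sumrN (sum_opt perm_term_bounded hsg).
apply: nu_ge_prod => j _; rewrite permK nablaE.
have hs : nu_ge d0 (perm_term A (lift_perm j (sg j) (unlift_perm j sg))).
  by rewrite unlift_permK.
rewrite perm_term_lift in hs.
have hminor := nu_ge_smul_inv (opt_spec hsg j).1 hs.
have hdet : nu_ge (d0 - nu_of (A j (sg j))) (sdet (row' j (col' (sg j) A))).
  by rewrite sdetE; apply: nu_ge_big_term hminor => //; apply: mem_index_enum.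
have := nu_ge_smul (_ : nu_ge (- d0) (Tan (- d0))) hdet.
by rewrite addKr; apply; apply: le_refl.
Qed.

Lemma nabla_det_mul_det : gs (smul (sdet N) (sdet A)) sone.
Proof.
rewrite detA; case: (nu_exact nabla_det_nu_le nabla_det_nu_ge) => ->.
  by left; rewrite /= addNr.
by right; rewrite /= addNr le_refl.
Qed.

(* Row k of A times column k of N is the Laplace expansion of det A / d0. *)
Lemma adj_diag k : \big[sadd/NegInf]_i smul (A k i) (N i k) = sone.
Proof.
under eq_bigr do rewrite nablaE smulCA.
by rewrite -big_distrr -det_expand_row detA /= addNr.
Qed.

(* Row l of A times column k of N, for l != k, expands the determinant of A
   with row k replaced by row l, which has two equal rows. *)
Lemma adj_offdiag l k : l != k -> nontan (\big[sadd/NegInf]_i smul (A l i) (N i k)).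
Proof.
move=> hlk; under eq_bigr do rewrite nablaE smulCA.
rewrite -big_distrr; apply: nontan_smulr.
pose M : 'M[stv G]_n.+1 := \matrix_(r, c) if r == k then A l c else A r c.
have -> : \big[sadd/NegInf]_i smul (A l i) (sdet (row' k (col' i A))) = sdet M.
  rewrite (det_expand_row M k); apply: eq_bigr => i _; rewrite mxE eqxx; congr smul.
  congr sdet; apply/matrixP => r c; rewrite !mxE eq_sym.
  by rewrite (negbTE (neq_lift k r)).
apply: (@nontan_det_equal_rows _ _ k l); first by rewrite eq_sym.
by move=> c; rewrite !mxE eqxx (negbTE hlk).
Qed.

Lemma det_similar_gs B : gs (sdet (smulmx le (smulmx le N B) A)) (sdet B).
Proof.
apply: gs_trans (det_mul_gs _ _) _.
apply: gs_trans (gs_smull _ (det_mul_gs _ _)) _.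
rewrite -smulA [smul (sdet B) _]smulC smulA.
by apply: gs_trans (gs_smull _ nabla_det_mul_det) _; rewrite mul1s; apply: gs_refl.
Qed.

(* tr (N B A) = sum_(k,l) B k l * (A N) l k, where (A N) k k = 1 and the
   off-diagonal entries of A N are not tangible. *)
Lemma trace_similar_gs B : gs (strace le (smulmx le (smulmx le N B) A)) (strace le B).
Proof.
have -> : strace le (smulmx le (smulmx le N B) A) =
    \big[sadd/NegInf]_k \big[sadd/NegInf]_l
       smul (B k l) (\big[sadd/NegInf]_i smul (A l i) (N i k)).
  rewrite /strace; transitivity (\big[sadd/NegInf]_i \big[sadd/NegInf]_l
                   \big[sadd/NegInf]_k smul (B k l) (smul (A l i) (N i k))).
    apply: eq_bigr => i _; rewrite mxE; apply: eq_bigr => l _.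
    rewrite mxE big_distrl; apply: eq_bigr => k _.
    exact: smul_rot.
  rewrite exchange_big /=; under eq_bigr do rewrite exchange_big /=.
  rewrite exchange_big /=; apply: eq_bigr => k _; apply: eq_bigr => l _.
  by rewrite big_distrr.
apply: gs_big => k _.
rewrite (bigD1 k) //= adj_diag muls1 -[X in gs _ X]adds0.
apply: gs_sadd (gs_refl _) (gs_nontan _); apply: nontan_big => l hl.
exact/nontan_smulr/adj_offdiag.
Qed.

End Nabla.

End Supertropical.

Theorem mainTheorem6 (G : zmodType) (le : rel G) (Hle : ordered_abgroup le)
  (n : nat) (A B B' : 'M[stv G]_n) :
  nonsingular le A ->
  B' = smulmx le (smulmx le (snabla le A) B) A ->
  (gs le (sdet le B') (sdet le B) /\
   (nonsingular le B' -> sdet le B' = sdet le B)) /\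
  gs le (strace le B') (strace le B).
Proof.
case: n A B B' => [|n] A B B'.
  move=> _ ->; have -> : smulmx le (smulmx le (snabla le A) B) A = B.
    by apply/matrixP => -[].
  by split; [split; [apply: gs_refl | by []] | apply: gs_refl].
rewrite /nonsingular; case detA: (sdet le A) => [|d0|d0] // _ ->.
have hdet := det_similar_gs Hle detA B.
split; last exact: (trace_similar_gs Hle detA B).
by split => // hB'; apply: gs_tangible hdet hB'.
Qed.
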